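(* Under the standing assumptions of the context, let $F(h):=\alpha Lh+\alpha_p\Delta_p(h)+\nabla\psi(h)$ and suppose $s(t)\to s_\infty$ as $t\to\infty$. Then $F(h_\infty)=s_\infty$ has a unique solution $h_\infty$, and for any solution $h$ of $\dot h=-F(h)+s(t)$, the error $e=h-h_\infty$ satisfies \[ \frac{d}{dt}\Bigl(\tfrac12\|e\|_2^2\Bigr)\le-\mu\|e\|_2^2+\|e\|_2\|s-s_\infty\|_2 . \] Hence if $s\equiv s_\infty$, then $\|e(t)\|_2\le e^{-\mu(t-t_0)}\|e(t_0)\|_2$ for $t\ge t_0$. In the linear-quadratic case $\psi(h)=\frac12(h-h_\star)^\top\Gamma(h-h_\star)$ with $\Gamma$ symmetric positive definite, $\alpha_p=0$ (and $s\equiv s_\infty$), \[ \|e(t)\|_2\le e^{-\rho(t-t_0)}\|e(t_0)\|_2,\qquad \rho=\min\{\gamma_{\min},\alpha\lambda_2\}, \] where $\gamma_{\min}=\lambda_{\min}(\Gamma)$.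
   Context: $G$ is a connected undirected weighted graph on $N$ nodes with symmetric weights $W_{ij}\ge0$, $W_{ii}=0$; $L=D-W$ with $D=\mathrm{diag}(\sum_jW_{ij})$ and eigenvalues $0=\lambda_1<\lambda_2\le\dots\le\lambda_N$. For $p\in[2,\infty)$, $(\Delta_p(h))_i=\sum_jW_{ij}|h_i-h_j|^{p-2}(h_i-h_j)$. Standing assumptions: $p\in[2,\infty)$; $\alpha>0$, $\alpha_p\ge0$; $s:\mathbb{R}_{\ge0}\to\mathbb{R}^N$ measurable and locally bounded; $\psi$ is $C^1$ and $\mu$-strongly convex with $\mu>0$: $\langle\nabla\psi(x)-\nabla\psi(y),x-y\rangle\ge\mu\|x-y\|_2^2$. *)

From HB Require Import structures.
From mathcomp Require Import all_boot all_order all_algebra.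
From mathcomp Require Import all_classical all_reals all_analysis.
Set Implicit Arguments. Unset Strict Implicit. Unset Printing Implicit Defensive.
Import Order.TTheory GRing.Theory Num.Theory.
Import numFieldNormedType.Exports.
Local Open Scope ring_scope.

Section Defs.
Variables (R : realType) (N : nat).

Definition dotv (u v : 'cV[R]_N) : R := \sum_i u i 0 * v i 0.
Definition norm2 (v : 'cV[R]_N) : R := Num.sqrt (dotv v v).

Definition weight_matrix (W : 'M[R]_N) : Prop :=
  (forall i j, W i j = W j i) /\ (forall i j, 0 <= W i j) /\ (forall i, W i i = 0).

Definition connected_graph (W : 'M[R]_N) : Prop :=
  forall i j : 'I_N, connect [rel a b | 0 < W a b] i j.

Definition laplacian (W : 'M[R]_N) : 'M[R]_N :=
  \matrix_(i, j) ((i == j)%:R * (\sum_k W i k) - W i j).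

Definition plaplacian (W : 'M[R]_N) (p : R) (h : 'cV[R]_N) : 'cV[R]_N :=
  \col_i (\sum_j W i j * (`|h i 0 - h j 0| `^ (p - 2)) * (h i 0 - h j 0)).

Definition sorted_eigenvalues (A : 'M[R]_N) (sl : seq R) : Prop :=
  sorted <=%R sl /\ char_poly A = \prod_(x <- sl) ('X - x%:P).

Definition sym_posdef (G : 'M[R]_N) : Prop :=
  G^T = G /\ forall v : 'cV[R]_N, v != 0 -> 0 < (v^T *m G *m v) 0 0.

End Defs.

(* The field F = alpha L + alpha_p Delta_p + grad psi is mu-strongly monotone:
   L h and Delta_p h both have the form (sum_j W_ij g (h_i - h_j))_i with g odd and
   nondecreasing, and symmetrising the double sum shows that such maps are monotone.
   A continuous strongly monotone map of R^N is bijective: injectivity is immediate,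
   and F y = s is solved one coordinate at a time, because along the next coordinate
   the partial solution moves continuously and the next component of F is strongly
   increasing (intermediate value theorem).  Along a trajectory,
   d/dt |e|^2/2 = <e, -(F h - F h_inf) + (s - s_inf)>, which gives the dissipation
   inequality by strong monotonicity and Cauchy-Schwarz; Gronwall turns it into
   exponential decay.  In the linear-quadratic case grad psi is lambda_min(Gamma)-
   strongly monotone by the Rayleigh bound, and lambda_min(Gamma) >= rho. *)

From HB Require Import structures.
From mathcomp Require Import all_boot all_order all_algebra.
From mathcomp Require Import all_classical all_reals all_analysis.
From mathcomp Require Import ring lra.
Import Order.TTheory GRing.Theory Num.Theory.
Import numFieldNormedType.Exports.
Local Open Scope ring_scope.
Local Open Scope classical_set_scope.
Set Implicit Arguments. Unset Strict Implicit. Unset Printing Implicit Defensive.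

Section InnerProduct.
Variables (R : realType) (N : nat).
Implicit Types (u v w : 'cV[R]_N) (A : 'M[R]_N).

Lemma dotvC u v : dotv u v = dotv v u.
Proof. by apply: eq_bigr => i _; rewrite mulrC. Qed.

Lemma dotvDl u v w : dotv (u + v) w = dotv u w + dotv v w.
Proof. by rewrite /dotv -big_split; apply: eq_bigr => i _; rewrite !mxE mulrDl. Qed.

Lemma dotvNl u w : dotv (- u) w = - dotv u w.
Proof. by rewrite /dotv -sumrN; apply: eq_bigr => i _; rewrite !mxE mulNr. Qed.

Lemma dotvBl u v w : dotv (u - v) w = dotv u w - dotv v w.
Proof. by rewrite dotvDl dotvNl. Qed.

Lemma dotvZl (a : R) u w : dotv (a *: u) w = a * dotv u w.
Proof. by rewrite /dotv mulr_sumr; apply: eq_bigr => i _; rewrite !mxE mulrA. Qed.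

Lemma dotvDr u v w : dotv w (u + v) = dotv w u + dotv w v.
Proof. by rewrite ![dotv w _]dotvC dotvDl. Qed.

Lemma dotvNr u w : dotv w (- u) = - dotv w u.
Proof. by rewrite ![dotv w _]dotvC dotvNl. Qed.

Lemma dotvBr u v w : dotv w (u - v) = dotv w u - dotv w v.
Proof. by rewrite dotvDr dotvNr. Qed.

Lemma dotvZr (a : R) u w : dotv w (a *: u) = a * dotv w u.
Proof. by rewrite ![dotv w _]dotvC dotvZl. Qed.

Lemma dotv0l w : dotv 0 w = 0.
Proof. by rewrite /dotv big1 // => i _; rewrite mxE mul0r. Qed.

Lemma dotv0r w : dotv w 0 = 0.
Proof. by rewrite dotvC dotv0l. Qed.

Lemma dotvE u v : dotv u v = (u^T *m v) 0 0.
Proof. by rewrite mxE; apply: eq_bigr => i _; rewrite mxE. Qed.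

Lemma dotv_mulmxr A u v : dotv u (A *m v) = dotv (A^T *m u) v.
Proof. by rewrite !dotvE trmx_mul trmxK mulmxA. Qed.

Lemma dotv_mulmxE A u v : dotv u (A *m v) = \sum_i \sum_j u i 0 * A i j * v j 0.
Proof.
by apply: eq_bigr => i _; rewrite mxE mulr_sumr; apply: eq_bigr => j _; rewrite mulrA.
Qed.

Lemma dotvv_ge0 v : 0 <= dotv v v.
Proof. by rewrite sumr_ge0 // => i _; rewrite -expr2 sqr_ge0. Qed.

Lemma sqr_coord_le_dotvv v i : v i 0 ^+ 2 <= dotv v v.
Proof.
rewrite /dotv (bigD1 i) //= -expr2 lerDl sumr_ge0 // => j _.
by rewrite -expr2 sqr_ge0.
Qed.

Lemma dotvv_eq0 v : dotv v v = 0 -> v = 0.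
Proof.
move=> v0; apply/matrixP => i j; rewrite (ord1 j) mxE.
apply/eqP; rewrite -sqrf_eq0 eq_le sqr_ge0 andbT -v0.
exact: sqr_coord_le_dotvv.
Qed.

Lemma norm2_sqr v : norm2 v ^+ 2 = dotv v v.
Proof. by rewrite sqr_sqrtr // dotvv_ge0. Qed.

Lemma norm2_ge0 v : 0 <= norm2 v.
Proof. exact: sqrtr_ge0. Qed.

Lemma dotv_le_norm2 u v : dotv u v <= norm2 u * norm2 v.
Proof.
have [v0|v0] := eqVneq (dotv v v) 0.
  by rewrite (dotvv_eq0 v0) dotv0r mulr_ge0 // norm2_ge0.
have vpos : 0 < dotv v v by rewrite lt_def v0 dotvv_ge0.
set a := dotv u v; set b := dotv v v.
have : 0 <= dotv (u - (a / b) *: v) (u - (a / b) *: v) := dotvv_ge0 _.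
rewrite dotvBl !dotvBr !dotvZl !dotvZr -/a -/b [dotv v u]dotvC -/a.
have -> : dotv u u - a / b * a - (a / b * a - a / b * (a / b * b)) =
          dotv u u - a ^+ 2 / b by field; rewrite v0.
rewrite subr_ge0 ler_pdivrMr // => a2.
apply: le_trans (ler_norm a) _.
rewrite -(@ler_pXn2r _ 2) ?nnegrE ?mulr_ge0 ?norm2_ge0 //.
by rewrite real_normK ?num_real // exprMn !norm2_sqr.
Qed.

End InnerProduct.

Section Continuity.
Variable R : realType.

Lemma continuous_mx (T : topologicalType) m n (f : T -> 'M[R]_(m, n)) x :
  (forall i j, {for x, continuous (fun t => f t i j)}) -> {for x, continuous f}.
Proof.
move=> fij; apply/cvgrPdist_le => e e0; near=> t.
rewrite /Num.Def.normr /= mx_normrE (bigmax_le _ (ltW e0)) //= => ij _.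
rewrite !mxE /=; move: ij; near: t; apply: filter_forall => /= ij.
exact: (cvgrPdist_le _ _).1 (fij ij.1 ij.2) e e0.
Unshelve. all: by end_near. Qed.

Lemma continuous_sum (T : topologicalType) (I : Type) (r : seq I) (f : I -> T -> R) :
  (forall i, continuous (f i)) -> continuous (fun t => \sum_(i <- r) f i t).
Proof. by move=> fc; apply: continuous_big => //; exact: add_continuous. Qed.

Definition spow (q x : R) := `|x| `^ q * x.

Lemma spowN q x : spow q (- x) = - spow q x.
Proof. by rewrite /spow normrN mulrN. Qed.

Lemma spow_homo q : 0 <= q -> {homo spow q : x y / x <= y}.
Proof.
move=> q0; have nneg x y : 0 <= x -> x <= y -> spow q x <= spow q y.
  move=> x0 xy; have y0 := le_trans x0 xy.
  by rewrite /spow !ger0_norm // ler_pM ?powR_ge0 // ge0_ler_powR.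
move=> x y xy; have [x0|x0] := leP 0 x; first exact: nneg.
have [y0|y0] := leP 0 y.
  apply: (@le_trans _ _ 0); last by rewrite /spow mulr_ge0 ?powR_ge0.
  by rewrite /spow mulr_ge0_le0 ?powR_ge0 ?ltW.
rewrite -lerN2 -!spowN; apply: nneg; rewrite ?lerN2 // oppr_ge0; exact: ltW.
Qed.

Lemma continuous_spow q : 0 <= q -> continuous (spow q).
Proof.
move=> q0 z; have [->|z0] := eqVneq z 0.
  (* at 0: |spow q t| <= |t| as soon as |t| <= 1 *)
  rewrite /continuous_at {2}/spow mulr0; apply/cvgrPdist_le => e e0.
  near=> t; rewrite sub0r normrN /spow normrM (ger0_norm (powR_ge0 _ _)).
  have t1 : `|t| <= 1 by near: t; apply: (@nbhs0_le R R^o).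
  have te : `|t| <= e by near: t; apply: (@nbhs0_le R R^o).
  apply: le_trans te; rewrite -[leRHS]mul1r ler_wpM2r //.
  apply: (@le_trans _ _ (1 `^ q)); last by rewrite powR1.
  by apply: ge0_ler_powR; rewrite ?nnegrE.
have pow_cont : {for `|z|, continuous (fun x : R => x `^ q)}.
  apply/differentiable_continuous/derivable1_diffP/derivable_powR.
  by rewrite in_itv /= andbT normr_gt0.
exact: continuousM (continuous_comp (@norm_continuous _ R^o z) pow_cont) cvg_id.
Unshelve. all: by end_near. Qed.

End Continuity.

Section StrongMonotonicity.
Variables (R : realType) (N : nat).
Implicit Types (F G : 'cV[R]_N -> 'cV[R]_N) (mu nu : R).

Definition strongly_monotone mu F :=
  forall x y, mu * dotv (x - y) (x - y) <= dotv (F x - F y) (x - y).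

Lemma strongly_monotoneW mu nu F :
  nu <= mu -> strongly_monotone mu F -> strongly_monotone nu F.
Proof. by move=> numu Fm x y; apply: le_trans (Fm x y); rewrite ler_wpM2r ?dotvv_ge0. Qed.

Lemma strongly_monotoneD mu nu F G : strongly_monotone mu F -> strongly_monotone nu G ->
  strongly_monotone (mu + nu) (fun x => F x + G x).
Proof. by move=> Fm Gm x y; rewrite opprD addrACA [leRHS]dotvDl mulrDl lerD. Qed.

Lemma strongly_monotoneZ (a : R) mu F : 0 <= a -> strongly_monotone mu F ->
  strongly_monotone (a * mu) (fun x => a *: F x).
Proof. by move=> a0 Fm x y; rewrite -scalerBr dotvZl -mulrA ler_wpM2l. Qed.

Lemma strongly_monotone_inj mu F : 0 < mu -> strongly_monotone mu F -> injective F.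
Proof.
move=> mu0 Fm x y Fxy; have := Fm x y; rewrite Fxy subrr dotv0l pmulr_rle0 // => xy.
apply/eqP; rewrite -subr_eq0; apply/eqP/dotvv_eq0.
by apply/eqP; rewrite eq_le xy dotvv_ge0.
Qed.

End StrongMonotonicity.

Section GraphOperators.
Variables (R : realType) (N : nat) (W : 'M[R]_N).
Hypotheses (W_sym : forall i j, W i j = W j i) (W_ge0 : forall i j, 0 <= W i j).

Definition edge_op (g : R -> R) (h : 'cV[R]_N) : 'cV[R]_N :=
  \col_i \sum_j W i j * g (h i 0 - h j 0).

Lemma edge_op_monotone g : (forall x, g (- x) = - g x) -> {homo g : x y / x <= y} ->
  strongly_monotone 0 (edge_op g).
Proof.
move=> gN g_homo h k; rewrite mul0r.
pose d i := h i 0 - k i 0.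
pose T i j := W i j * (g (h i 0 - h j 0) - g (k i 0 - k j 0)).
set S := dotv _ _.
have S_rows : S = \sum_i \sum_j T i j * d i.
  rewrite /S /dotv; apply: eq_bigr => i _; rewrite !mxE -sumrB mulr_suml.
  by apply: eq_bigr => j _; rewrite /T /d -mulrBr.
(* swapping i and j, using the symmetry of W and the oddness of g *)
have S_cols : S = \sum_i \sum_j T i j * (- d j).
  rewrite S_rows exchange_big /=; apply: eq_bigr => i _; apply: eq_bigr => j _.
  by rewrite /T W_sym -(opprB (h i 0)) -(opprB (k i 0)) !gN /d; ring.
suff : 0 <= S + S by lra.
rewrite {1}S_rows S_cols -big_split /= sumr_ge0 // => i _.
rewrite -big_split /= sumr_ge0 // => j _.
rewrite -mulrDr /T -mulrA mulr_ge0 //.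
have -> : d i + - d j = (h i 0 - h j 0) - (k i 0 - k j 0) by rewrite /d; ring.
set a := h i 0 - h j 0; set b := k i 0 - k j 0.
have [ab|ba] := leP a b; first by rewrite mulr_le0 // subr_le0 ?g_homo.
by rewrite mulr_ge0 // subr_ge0 ?g_homo // ltW.
Qed.

Lemma continuous_edge_op g : continuous g -> continuous (edge_op g).
Proof.
move=> gc h; apply: continuous_mx => i j; rewrite (ord1 j).
under [X in {for h, continuous X}]funext => x do rewrite mxE.
apply: continuous_sum h => k x; apply: continuousM; first exact: cst_continuous.
apply: continuous_comp (gc _).
apply: (@continuousB _ _ _ (fun t : 'cV[R]_N => t i 0) (fun t => t k 0)).
  exact: (@coord_continuous R N 1 i 0 x).
exact: (@coord_continuous R N 1 k 0 x).
Qed.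

Lemma laplacianE h : laplacian W *m h = edge_op id h.
Proof.
apply/matrixP => i k; rewrite (ord1 k) !mxE.
under eq_bigr do rewrite mxE mulrBl.
set d := \sum_k W i k.
rewrite sumrB (bigD1 i) //= eqxx mul1r big1 ?addr0; last first.
  by move=> j ji; rewrite eq_sym (negbTE ji) !mul0r.
by rewrite mulr_suml -sumrB; apply: eq_bigr => j _; rewrite mulrBr.
Qed.

Lemma plaplacianE p h : plaplacian W p h = edge_op (spow (p - 2)) h.
Proof. by apply/matrixP => i k; rewrite !mxE; apply: eq_bigr => j _; rewrite mulrA. Qed.

Lemma laplacian_monotone : strongly_monotone 0 (fun h => laplacian W *m h).
Proof.
move=> x y; rewrite !laplacianE.
by apply: edge_op_monotone => // a b.
Qed.

Lemma plaplacian_monotone p : 2 <= p -> strongly_monotone 0 (plaplacian W p).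
Proof.
move=> p2 x y; rewrite !plaplacianE.
by apply: edge_op_monotone => [a|]; [exact: spowN | apply: spow_homo; rewrite subr_ge0].
Qed.

End GraphOperators.

Section GraphField.
Variables (R : realType) (N : nat) (W : 'M[R]_N) (p alpha alpha_p : R)
  (g : 'cV[R]_N -> 'cV[R]_N).

Definition graph_field h :=
  alpha *: (laplacian W *m h) + alpha_p *: plaplacian W p h + g h.

Lemma graph_field_strongly_monotone mu :
  (forall i j, W i j = W j i) -> (forall i j, 0 <= W i j) ->
  2 <= p -> 0 <= alpha -> 0 <= alpha_p ->
  strongly_monotone mu g -> strongly_monotone mu graph_field.
Proof.
move=> W_sym W_ge0 p2 alpha0 alpha_p0 gm.
have := strongly_monotoneD (strongly_monotoneD
  (strongly_monotoneZ alpha0 (laplacian_monotone W_sym W_ge0))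
  (strongly_monotoneZ alpha_p0 (plaplacian_monotone W_sym W_ge0 p2))) gm.
by rewrite !mulr0 !add0r.
Qed.

Lemma continuous_graph_field : 2 <= p -> continuous g -> continuous graph_field.
Proof.
move=> p2 gc; have -> : graph_field =
    (fun h => alpha *: edge_op W id h) +
    (fun h => alpha_p *: edge_op W (spow (p - 2)) h) + g.
  by apply/funext => h; rewrite /graph_field laplacianE plaplacianE.
have spow_c : continuous (spow (p - 2)) by apply: continuous_spow; rewrite subr_ge0.
move=> h; apply: continuousD; last exact: gc.
apply: continuousD; apply: continuousZ; try exact: cst_continuous.
  by apply: continuous_edge_op => x; exact: cvg_id.
exact: continuous_edge_op spow_c h.
Qed.

End GraphField.

Lemma strongly_increasing_surj (R : realType) (phi : R -> R) (mu : R) :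
  0 < mu -> continuous phi ->
  (forall c c', c' <= c -> mu * (c - c') <= phi c - phi c') ->
  forall v, exists c, phi c = v.
Proof.
move=> mu0 phic phi_gap v; pose b := `|v - phi 0| / mu.
have b0 : 0 <= b by rewrite divr_ge0 // ltW.
have mub : mu * b = `|v - phi 0| by rewrite mulrC divfK ?gt_eqF.
have phib : v <= phi b.
  by have := phi_gap b 0 b0; have := ler_norm (v - phi 0); rewrite subr0 mub; lra.
have phiNb : phi (- b) <= v.
  have := phi_gap 0 (- b); rewrite oppr_le0 sub0r opprK mub => /(_ b0).
  by have := ler_norm (phi 0 - v); rewrite distrC; lra.
have [c _ <-] : exists2 c, c \in `[(- b), b]%R & phi c = v.
  apply: IVT; first lra.
    by apply: continuous_subspaceT => x; apply: phic.
  by rewrite ge_min phiNb le_max phib orbT.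
by exists c.
Qed.

Lemma continuous_of_monotone_control (R : realType) (N : nat)
    (Y : R -> 'cV[R]_N) (phi : R -> R) (mu : R) : 0 < mu ->
  (forall c c', mu * dotv (Y c - Y c') (Y c - Y c') <= (phi c - phi c') * (c - c')) ->
  continuous Y.
Proof.
move=> mu0 ctrl c0; apply: continuous_mx => i j; rewrite (ord1 j).
have phi_homo c c' : c' <= c -> phi c' <= phi c.
  rewrite le_eqVlt => /predU1P [-> //|]; rewrite -subr_gt0 -subr_ge0 => cc'.
  rewrite -(pmulr_lge0 _ cc'); apply: le_trans (ctrl c c').
  by rewrite mulr_ge0 ?dotvv_ge0 ?ltW.
pose M := phi (c0 + 1) - phi (c0 - 1).
have M0 : 0 <= M by rewrite subr_ge0 phi_homo //; lra.
apply/cvgrPdist_le => e e0.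
pose r := Num.min 1 (mu * e ^+ 2 / (M + 1)).
have r0 : 0 < r by rewrite lt_min ltr01 /= divr_gt0 ?mulr_gt0 ?exprn_gt0 //; lra.
near=> c.
have : `|c0 - c| < r by near: c; apply: (@near_ball _ R^o c0).
rewrite lt_min => /andP [c1 cr].
have phi_near : `|phi c - phi c0| <= M.
  move: c1; rewrite ltr_norml => /andP [c1 c1'].
  rewrite ler_norml /M; apply/andP; split.
    by have := phi_homo c (c0 - 1); have := phi_homo (c0 + 1) c0; lra.
  by have := phi_homo (c0 + 1) c; have := phi_homo c0 (c0 - 1); lra.
(* mu (Y c - Y c0)_i^2 <= |phi c - phi c0| |c - c0| <= M |c - c0| < mu e^2 *)
rewrite -(@ler_pXn2r _ 2) ?nnegrE ?(ltW e0) // real_normK ?num_real //.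
have := sqr_coord_le_dotvv (Y c - Y c0) i; rewrite !mxE -sqrrN opprB => /le_trans.
apply; rewrite -(ler_pM2l mu0); apply: le_trans (ctrl c c0) _.
apply: le_trans (ler_norm _) _; rewrite normrM [`|c - c0|]distrC.
apply: le_trans (ler_wpM2r (normr_ge0 _) phi_near) _.
move: cr; rewrite ltr_pdivlMr; last lra.
by move=> /ltW; apply: le_trans; rewrite mulrDr mulr1 mulrC lerDl.
Unshelve. all: by end_near. Qed.

Section Surjectivity.
Variables (R : realType) (N : nat) (F : 'cV[R]_N -> 'cV[R]_N) (mu : R).
Hypotheses (mu_gt0 : 0 < mu) (F_cont : continuous F) (F_mono : strongly_monotone mu F).

Definition prefix_solution (k : nat) (z s y : 'cV[R]_N) :=
  (forall i : 'I_N, (k <= i)%N -> y i 0 = z i 0) /\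
  (forall i : 'I_N, (i < k)%N -> F y i 0 = s i 0).

Lemma prefix_solution_step k (kN : (k < N)%N) s :
  (forall z, exists y, prefix_solution k z s y) ->
  forall z, exists y, prefix_solution k.+1 z s y.
Proof.
move=> IH z; pose kk := Ordinal kN.
pose z_at c := \col_i (if i == kk then c else z i 0) : 'cV[R]_N.
have [Y Y_sol] := choice (fun c => IH (z_at c)).
have Y_kk c : Y c kk 0 = c by rewrite (Y_sol c).1 // mxE eqxx.
have Y_gt c (i : 'I_N) : (k < i)%N -> Y c i 0 = z i 0.
  move=> ki; rewrite (Y_sol c).1 ?(ltnW ki) // mxE ifN //.
  by apply/eqP => ik; move: ki; rewrite ik ltnn.
have FY_lt c (i : 'I_N) : (i < k)%N -> F (Y c) i 0 = s i 0 := (Y_sol c).2 i.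
pose phi c := F (Y c) kk 0.
(* [Y c - Y c'] is supported on [kk] and [F (Y c) - F (Y c')] vanishes below [kk] *)
have gap c c' : dotv (F (Y c) - F (Y c')) (Y c - Y c') = (phi c - phi c') * (c - c').
  rewrite /dotv (bigD1 kk) //= big1 ?addr0; first by rewrite !mxE !Y_kk.
  move=> i ik; rewrite !mxE; case: (ltngtP i k) => [lt|gt|eq].
  - by rewrite !FY_lt // subrr mul0r.
  - by rewrite !Y_gt // subrr mulr0.
  - by case/eqP: ik; apply: val_inj.
have ctrl c c' : mu * dotv (Y c - Y c') (Y c - Y c') <= (phi c - phi c') * (c - c').
  by rewrite -gap; apply: F_mono.
have phi_gap c c' : c' <= c -> mu * (c - c') <= phi c - phi c'.
  rewrite le_eqVlt => /predU1P [->|]; first by rewrite !subrr mulr0.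
  rewrite -subr_gt0 => cc'; rewrite -(ler_pM2r cc') -mulrA -expr2.
  apply: le_trans (ctrl c c'); rewrite ler_wpM2l ?(ltW mu_gt0) //.
  by have := sqr_coord_le_dotvv (Y c - Y c') kk; rewrite !mxE !Y_kk.
have phi_cont : continuous phi.
  move=> c; have Y_cont := continuous_of_monotone_control mu_gt0 ctrl.
  have coord_cont : {for F (Y c), continuous (fun y : 'cV[R]_N => y kk 0)}.
    exact: coord_continuous.
  have FY_cont := continuous_comp (@F_cont (Y c)) coord_cont.
  exact: continuous_comp (Y_cont c) FY_cont.
have [c phic] := strongly_increasing_surj mu_gt0 phi_cont phi_gap (s kk 0).
exists (Y c); split=> i; first exact: Y_gt.
rewrite ltnS leq_eqVlt => /predU1P [ik|]; last exact: FY_lt.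
by rewrite (_ : i = kk) //; apply: val_inj.
Qed.

Lemma prefix_solution_exists k :
  (k <= N)%N -> forall z s, exists y, prefix_solution k z s y.
Proof.
elim: k => [_ z s|k IH kN z s]; first by exists z; split=> // i; rewrite ltn0.
exact: prefix_solution_step (IH (ltnW kN) ^~ s) z.
Qed.

Lemma strongly_monotone_surj s : exists y, F y = s.
Proof.
have [y [_ Fy]] := prefix_solution_exists (leqnn N) 0 s.
by exists y; apply/matrixP => i j; rewrite (ord1 j) Fy.
Qed.

End Surjectivity.

Lemma gronwall_exp (R : realType) (D dD : R -> R) (c a b : R) : a <= b ->
  {within `[a, b], continuous D} ->
  (forall x, x \in `]a, b[%R -> is_derive x 1 D (dD x)) ->
  (forall x, x \in `]a, b[%R -> dD x <= - c * D x) ->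
  D b <= expR (- c * (b - a)) * D a.
Proof.
move=> ab D_cont D_der dD_le.
pose E x := expR (c * x); pose U x := E x * D x.
have E_der (x : R) : is_derive x 1 E (E x * c).
  apply: is_derive1_comp; apply: is_derive_eq (is_deriveZ c (@is_derive_id _ R^o x 1)) _.
  by rewrite /GRing.scale /= mulr1.
have U_der x : x \in `]a, b[%R -> is_derive x 1 U (E x * (c * D x + dD x)).
  move=> xab; apply: is_derive_eq (is_deriveM (E_der x) (D_der x xab)) _.
  by rewrite /GRing.scale /=; ring.
have U_cont : {within `[a, b], continuous U}.
  move=> x; apply: continuousM (D_cont x); apply: continuous_subspaceT => y.
  by apply/differentiable_continuous/derivable1_diffP; case: (E_der y).
have U_ab : U b <= U a.
  apply: (ler0_derive1_le_cc _ _ U_cont); rewrite ?in_itv /= ?lexx ?ab //.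
    by move=> x xab; case: (U_der x xab).
  move=> x xab; rewrite derive1E; have [_ ->] := U_der x xab.
  rewrite mulr_ge0_le0 ?expR_ge0 //.
  by have := dD_le x xab; lra.
have -> : D b = expR (- (c * b)) * U b by rewrite /U /E mulrA -expRD addNr expR0 mul1r.
apply: le_trans (ler_wpM2l (expR_ge0 _) U_ab) _.
by rewrite /U /E mulrA -expRD (_ : - (c * b) + c * a = - c * (b - a)) //; ring.
Qed.

Section Flow.
Variables (R : realType) (N : nat).
Implicit Types (F : 'cV[R]_N -> 'cV[R]_N) (h : R -> 'cV[R]_N) (c dh : 'cV[R]_N) (t : R).

Lemma is_derive_entry (V : normedModType R) m n (M : V -> 'M[R]_(m, n)) x v dM :
  is_derive x v M dM -> forall i j, is_derive x v (fun y => M y i j) (dM i j).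
Proof.
move=> [M_der <-] i j; rewrite derive_mx // mxE.
exact: derivableP ((derivable_mxP M x v).1 M_der i j).
Qed.

Lemma is_derive_sqr_dist h c t dh : is_derive t 1 h dh ->
  is_derive t 1 (fun x => dotv (h x - c) (h x - c)) (2 * dotv (h t - c) dh).
Proof.
move=> h_der; pose e i x := h x i 0 - c i 0.
have e_der i : is_derive t 1 (e i) (dh i 0).
  by apply: is_derive_eq (is_deriveB (is_derive_entry h_der i 0) (is_derive_cst _ _ _)) _;
    rewrite subr0.
have := is_derive_sum (fun i => is_deriveM (e_der i) (e_der i)).
rewrite fct_sumE (_ : (fun x => _) = fun x => dotv (h x - c) (h x - c)); last first.
  by apply/funext => x; apply: eq_bigr => i _; rewrite !mxE.
move/is_derive_eq; apply; rewrite /dotv mulr_sumr; apply: eq_bigr => i _.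
by rewrite !mxE /GRing.scale /= /e; ring.
Qed.

Lemma continuous_sqr_dist c : continuous (fun x : 'cV[R]_N => dotv (x - c) (x - c)).
Proof.
apply: continuous_sum => i x.
under [X in continuous_at _ X]funext => y do rewrite !mxE.
have e_cont : {for x, continuous (fun y : 'cV[R]_N => y i 0 - c i 0)}.
  by apply: (@continuousB _ _ _ (fun y : 'cV[R]_N => y i 0) (cst (c i 0)));
    [exact: coord_continuous | exact: cst_continuous].
exact: (continuousM e_cont e_cont).
Qed.

Lemma strongly_monotone_dissipation F mu h_inf x s : strongly_monotone mu F ->
  dotv (x - h_inf) (- F x + s) <=
    - mu * dotv (x - h_inf) (x - h_inf) + dotv (x - h_inf) (s - F h_inf).
Proof.
move=> F_mono; have -> : - F x + s = - (F x - F h_inf) + (s - F h_inf).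
  by rewrite [RHS]addrC opprB addrA subrK addrC.
rewrite dotvDr dotvNr [dotv _ (F x - _)]dotvC mulNr lerD2r lerN2.
exact: F_mono.
Qed.

Lemma lyapunov_inequality F mu (s : R -> 'cV[R]_N) s_inf h_inf h :
  strongly_monotone mu F -> F h_inf = s_inf ->
  (forall t, 0 < t -> is_derive t 1 h (- F (h t) + s t)) ->
  let V t := 2^-1 * norm2 (h t - h_inf) ^+ 2 in
  forall t, 0 < t -> derivable V t 1 /\
    V^`() t <= - mu * norm2 (h t - h_inf) ^+ 2 + norm2 (h t - h_inf) * norm2 (s t - s_inf).
Proof.
move=> F_mono F_h_inf h_der V t t0.
have V_der : is_derive t 1 V (dotv (h t - h_inf) (- F (h t) + s t)).
  rewrite /V; under eq_fun do rewrite norm2_sqr.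
  apply: is_derive_eq (is_deriveZ 2^-1 (is_derive_sqr_dist h_inf (h_der t t0))) _.
  by rewrite /GRing.scale /= mulrA mulVf ?mul1r // pnatr_eq0.
split; first by case: V_der.
rewrite derive1E; have [_ ->] := V_der.
apply: le_trans (strongly_monotone_dissipation _ _ _ F_mono) _.
by rewrite norm2_sqr F_h_inf lerD2l dotv_le_norm2.
Qed.

Lemma strongly_monotone_decay F r (s : R -> 'cV[R]_N) s_inf h_inf h :
  strongly_monotone r F -> F h_inf = s_inf -> (forall t, 0 <= t -> s t = s_inf) ->
  {within [set t | 0 <= t], continuous h} ->
  (forall t, 0 < t -> is_derive t 1 h (- F (h t) + s t)) ->
  forall t0 t, 0 <= t0 -> t0 <= t ->
    norm2 (h t - h_inf) <= expR (- r * (t - t0)) * norm2 (h t0 - h_inf).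
Proof.
move=> F_mono F_h_inf s_const h_cont h_der t0 t t00 t0t.
pose D x := dotv (h x - h_inf) (h x - h_inf).
pose dD x := 2 * dotv (h x - h_inf) (- F (h x) + s_inf).
have D_decay : D t <= expR (- (2 * r) * (t - t0)) * D t0.
  apply: (@gronwall_exp _ D dD) t0t _ _ _.
  - have sub : `[t0, t] `<=` [set x | 0 <= x].
      by move=> x; rewrite /= in_itv /= => /andP [x1 _]; apply: le_trans x1.
    have h_cont' := continuous_subspaceW sub h_cont.
    move=> x; have D_cont := @continuous_sqr_dist h_inf (h x).
    exact: (continuous_comp (h_cont' x) D_cont).
  - move=> x; rewrite in_itv /= => /andP [x1 _].
    have x_gt0 : 0 < x by apply: le_lt_trans x1.
    by rewrite /dD -(s_const x (ltW x_gt0)); apply/is_derive_sqr_dist/h_der.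
  - move=> x _; rewrite /dD mulNr -mulrA -mulrN ler_pM2l // -mulNr.
    have := @strongly_monotone_dissipation F r h_inf (h x) s_inf F_mono.
    by rewrite F_h_inf subrr dotv0r addr0.
rewrite /norm2 -/(D t) -/(D t0).
apply: (@le_trans _ _ (Num.sqrt (expR (- (2 * r) * (t - t0)) * D t0))).
  by rewrite ler_sqrt // mulr_ge0 ?expR_ge0 ?dotvv_ge0.
rewrite sqrtrM ?expR_ge0 // (_ : - (2 * r) * _ = 2%:R * (- r * (t - t0))); last by ring.
by rewrite expRM_natl sqrtr_sqr ger0_norm ?expR_ge0.
Qed.

End Flow.

Section Rayleigh.
Variables (R : realType) (N : nat).
Implicit Types (A B : 'M[R]_N) (u v w : 'cV[R]_N) (c : R).

Definition rayleigh_lb A c := forall v, c * dotv v v <= dotv v (A *m v).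

Lemma rayleigh_lbW A c c' : c' <= c -> rayleigh_lb A c -> rayleigh_lb A c'.
Proof. by move=> cc' Ac v; apply: le_trans (Ac v); rewrite ler_wpM2r ?dotvv_ge0. Qed.

Lemma dotv_shift A c v : dotv v ((A - c%:M) *m v) = dotv v (A *m v) - c * dotv v v.
Proof. by rewrite mulmxBl mul_scalar_mx dotvBr dotvZr. Qed.

Lemma abs_coord_mul_le v i j : `|v i 0| * `|v j 0| <= dotv v v.
Proof.
have := sqr_coord_le_dotvv v i; have := sqr_coord_le_dotvv v j.
rewrite -(real_normK (num_real (v i 0))) -(real_normK (num_real (v j 0))).
by have := sqr_ge0 (`|v i 0| - `|v j 0|); rewrite sqrrB; lra.
Qed.

Lemma abs_dotv_mulmx_le A v :
  `|dotv v (A *m v)| <= (\sum_i \sum_j `|A i j|) * dotv v v.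
Proof.
rewrite dotv_mulmxE; apply: le_trans (ler_norm_sum _ _ _) _; rewrite mulr_suml.
apply: ler_sum => i _; apply: le_trans (ler_norm_sum _ _ _) _; rewrite mulr_suml.
apply: ler_sum => j _.
by rewrite !normrM mulrAC mulrC ler_wpM2l // abs_coord_mul_le.
Qed.

Lemma unit_psd_rayleigh_lb B : B^T = B -> rayleigh_lb B 0 -> B \in unitmx ->
  exists2 t, 0 < t & rayleigh_lb B t.
Proof.
move=> B_sym B_psd B_unit; pose K := 1 + \sum_i \sum_j `|invmx B i j|.
have K_gt0 : 0 < K by rewrite ltr_pwDl // !sumr_ge0 // => i _; rewrite sumr_ge0.
exists K^-1 => [|v]; first by rewrite invr_gt0.
set t := K^-1; pose w := invmx B *m v.
have Bw : B *m w = v by rewrite mulmxA mulmxV // mul1mx.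
have t0 : 0 <= t by rewrite invr_ge0 ltW.
have wv : t * t * dotv w v <= t * dotv v v - t * t * dotv v v.
  have -> : t * dotv v v - t * t * dotv v v = t * t * ((K - 1) * dotv v v).
    by rewrite /t; field; rewrite gt_eqF.
  rewrite ler_wpM2l ?mulr_ge0 // dotvC /w; apply: le_trans (ler_norm _) _.
  by rewrite addrAC subrr add0r abs_dotv_mulmx_le.
have := B_psd (v - t *: w); rewrite mul0r mulmxBr -scalemxAr Bw.
rewrite !(dotvBl, dotvBr, dotvZl, dotvZr) [dotv w (B *m v)]dotv_mulmxr B_sym Bw.
have := mulr_ge0 (mulr_ge0 t0 t0) (dotvv_ge0 v).
lra.
Qed.

Lemma rayleigh_lb_max A : (0 < N)%N ->
  exists m, rayleigh_lb A m /\ forall c, rayleigh_lb A c -> c <= m.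
Proof.
move=> N_gt0; pose K := \sum_i \sum_j `|A i j|.
have lb_NK : rayleigh_lb A (- K).
  by move=> v; have := abs_dotv_mulmx_le A v; rewrite mulNr ler_norml => /andP [].
pose one := const_mx 1 : 'cV[R]_N.
have one_gt0 : 0 < dotv one one.
  rewrite /dotv (eq_bigr (fun=> 1)) => [|i _]; last by rewrite !mxE mulr1.
  by rewrite sumr_const card_ord ltr0n.
have lb_K c : rayleigh_lb A c -> c <= K.
  move=> Ac; have := le_trans (Ac one) (ler_norm _).
  by move/le_trans/(_ (abs_dotv_mulmx_le A one)); rewrite ler_pM2r.
pose S := [set c | rayleigh_lb A c].
have S_sup : has_sup S by split; [exists (- K) | exists K => c; apply: lb_K].
exists (sup S); split=> [v|c Sc]; last exact: sup_upper_bound.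
have [v0|v0] := eqVneq (dotv v v) 0.
  by rewrite (dotvv_eq0 v0) mulmx0 dotv0r mulr0.
have v_gt0 : 0 < dotv v v by rewrite lt_def v0 dotvv_ge0.
rewrite -ler_pdivlMr //; apply: ge_sup; first by exists (- K).
by move=> c Sc; rewrite ler_pdivlMr //; apply: Sc.
Qed.

Lemma sorted_head_le (sl : seq R) x : sorted <=%R sl -> x \in sl -> sl`_0 <= x.
Proof.
case: sl => [//|a s] /= s_sorted; rewrite inE => /predU1P [-> //|xs].
by have /allP := order_path_min le_trans s_sorted; apply.
Qed.

(* the best Rayleigh lower bound [m] is an eigenvalue: otherwise [A - m] would be
   invertible and positive semidefinite, hence have a larger lower bound *)
Lemma rayleigh_lb_min_eigenvalue A sl : A^T = A -> sorted_eigenvalues A sl ->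
  rayleigh_lb A sl`_0.
Proof.
move=> A_sym [sl_sorted A_char].
have [N0|N_gt0] := posnP N.
  move=> v; rewrite (_ : v = 0) ?dotv0l ?mulr0 //.
  by apply/matrixP => i; have := ltn_ord i; rewrite {2}N0.
have [m [Am m_max]] := rayleigh_lb_max A N_gt0.
pose B := A - m%:M.
have B_sym : B^T = B by rewrite /B linearB /= A_sym tr_scalar_mx.
have B_psd : rayleigh_lb B 0 by move=> v; rewrite mul0r dotv_shift subr_ge0.
have /det0P [x x0 xB] : \det B == 0.
  apply/negPn/negP => B_det.
  have B_unit : B \in unitmx by rewrite unitmxE unitfE.
  have [t t0 Bt] := unit_psd_rayleigh_lb B_sym B_psd B_unit.
  suff : m + t <= m by lra.
  by apply: m_max => v; rewrite mulrDl -lerBrDl -dotv_shift; apply: Bt.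
have : eigenvalue A m.
  apply/eigenvalueP; exists x => //.
  by apply/eqP; rewrite -subr_eq0 -mul_mx_scalar -mulmxBr xB.
rewrite eigenvalue_root_char A_char root_prod_XsubC => m_sl.
exact: rayleigh_lbW (sorted_head_le sl_sorted m_sl) Am.
Qed.

End Rayleigh.

Lemma derive_along (R : realType) (V W : normedModType R) (f : V -> W) x v :
  'D_v f x = 'D_1 (fun t : R => f (t *: v + x)) 0.
Proof.
rewrite /derive /= scale0r add0r.
by under [in RHS]eq_fun => t do rewrite addr0 [t%:A]mulr1.
Qed.

Section Quadratic.
Variables (R : realType) (N : nat) (G : 'M[R]_N) (h_star : 'cV[R]_N).
Hypothesis G_sym : G^T = G.

Lemma quadratic_derive x v :
  'D_v (fun y => 2^-1 * dotv (y - h_star) (G *m (y - h_star))) x =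
  dotv v (G *m (x - h_star)).
Proof.
rewrite derive_along; under eq_fun => t do rewrite -addrA.
move: (x - h_star) => e.
pose a := 2^-1 * dotv e (G *m e); pose b := dotv v (G *m e).
pose c := 2^-1 * dotv v (G *m v).
have -> : (fun t => 2^-1 * dotv (t *: v + e) (G *m (t *: v + e))) =
    fun t => a + t * b + t * t * c.
  apply/funext => t; rewrite mulmxDr -scalemxAr !(dotvDl, dotvDr, dotvZl, dotvZr).
  rewrite [dotv e (G *m v)]dotv_mulmxr G_sym [dotv (G *m e) v]dotvC.
  by rewrite /a /b /c; field.
have t_der := @is_derive_id _ R^o (0 : R) 1.
have := is_deriveD
  (is_deriveD (is_derive_cst a (0 : R) 1) (is_deriveM t_der (is_derive_cst b (0 : R) 1)))
  (is_deriveM (is_deriveM t_der t_der) (is_derive_cst c (0 : R) 1)).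
move=> [_ ->].
by rewrite /GRing.scale /= !(mulr0, mul0r, addr0, add0r) mulr1.
Qed.

Lemma quadratic_grad_strongly_monotone (psi : 'cV[R]_N -> R) gradpsi sl :
  sorted_eigenvalues G sl ->
  (forall x, psi x = 2^-1 * ((x - h_star)^T *m G *m (x - h_star)) 0 0) ->
  (forall x, differentiable psi x) ->
  (forall x v, 'd psi x v = dotv (gradpsi x) v) ->
  strongly_monotone sl`_0 gradpsi.
Proof.
move=> G_eig psiE psi_diff psi_grad.
have psiE' : psi = fun y => 2^-1 * dotv (y - h_star) (G *m (y - h_star)).
  by apply/funext => y; rewrite psiE dotvE mulmxA.
have grad x v : dotv (gradpsi x) v = dotv v (G *m (x - h_star)).
  by rewrite -psi_grad -deriveE // psiE' quadratic_derive.
move=> x y; rewrite dotvBl !grad -dotvBr -mulmxBr opprB addrA subrK.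
exact: rayleigh_lb_min_eigenvalue G_sym G_eig (x - y).
Qed.

End Quadratic.

Theorem mainTheorem9 (R : realType) (N : nat) (W : 'M[R]_N) (p alpha alpha_p mu : R)
    (s : R -> 'cV[R]_N) (s_inf : 'cV[R]_N)
    (psi : 'cV[R]_N -> R) (gradpsi : 'cV[R]_N -> 'cV[R]_N) :
  weight_matrix W -> connected_graph W ->
  2 <= p -> 0 < alpha -> 0 <= alpha_p ->
  (* s measurable and locally bounded on [0, +oo) *)
  (forall i : 'I_N, measurable_fun [set t : R | 0 <= t] (fun t => s t i 0)) ->
  (forall T, exists M, forall t, 0 <= t <= T -> norm2 (s t) <= M) ->
  (* psi is C^1 with gradient gradpsi *)
  (forall x, differentiable psi x) ->
  (forall x v, 'd psi x v = dotv (gradpsi x) v) ->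
  continuous gradpsi ->
  (* mu-strong convexity *)
  0 < mu ->
  (forall x y, mu * norm2 (x - y) ^+ 2 <= dotv (gradpsi x - gradpsi y) (x - y)) ->
  (* s(t) -> s_inf *)
  s t @[t --> +oo] --> s_inf ->
  let F := fun h : 'cV[R]_N =>
    alpha *: (laplacian W *m h) + alpha_p *: plaplacian W p h + gradpsi h in
  (* unique equilibrium *)
  (exists! h_inf, F h_inf = s_inf) /\
  (* error estimates for every solution on [0, +oo) *)
  (forall h_inf, F h_inf = s_inf ->
   forall h : R -> 'cV[R]_N,
     {within [set t : R | 0 <= t], continuous h} ->
     (forall t : R, 0 < t -> is_derive t 1 h (- F (h t) + s t)) ->
     let V := fun t : R => 2^-1 * norm2 (h t - h_inf) ^+ 2 in
     (forall t : R, 0 < t -> derivable V t 1 /\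
        V^`() t <= - mu * norm2 (h t - h_inf) ^+ 2
                   + norm2 (h t - h_inf) * norm2 (s t - s_inf)) /\
     ((forall t : R, 0 <= t -> s t = s_inf) ->
      forall t0 t : R, 0 <= t0 -> t0 <= t ->
        norm2 (h t - h_inf) <= expR (- mu * (t - t0)) * norm2 (h t0 - h_inf))) /\
  (* linear-quadratic case *)
  (forall (Gamma : 'M[R]_N) (h_star : 'cV[R]_N) (lamL lamG : seq R),
     sym_posdef Gamma ->
     (forall x, psi x = 2^-1 * ((x - h_star)^T *m Gamma *m (x - h_star)) 0 0) ->
     alpha_p = 0 ->
     (forall t : R, 0 <= t -> s t = s_inf) ->
     sorted_eigenvalues (laplacian W) lamL ->
     sorted_eigenvalues Gamma lamG ->
     let rho := Num.min (lamG`_0) (alpha * lamL`_1) in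
     forall h_inf, F h_inf = s_inf ->
     forall h : R -> 'cV[R]_N,
       {within [set t : R | 0 <= t], continuous h} ->
       (forall t : R, 0 < t -> is_derive t 1 h (- F (h t) + s t)) ->
       forall t0 t : R, 0 <= t0 -> t0 <= t ->
         norm2 (h t - h_inf) <= expR (- rho * (t - t0)) * norm2 (h t0 - h_inf)).
Proof.
move=> W_weight _ p2 alpha_gt0 alpha_p0 _ _ psi_diff psi_grad grad_cont mu_gt0.
move=> grad_mono _ F.
have [W_sym [W_ge0 _]] := W_weight.
have F_mono : strongly_monotone mu F.
  apply: graph_field_strongly_monotone => //; first exact: ltW.
  by move=> x y; rewrite -norm2_sqr.
have F_cont : continuous F by apply: continuous_graph_field.
split.
  have [h_inf F_h_inf] := strongly_monotone_surj mu_gt0 F_cont F_mono s_inf.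
  exists h_inf; split=> // y F_y.
  by apply: (strongly_monotone_inj mu_gt0 F_mono); rewrite F_h_inf F_y.
split=> [h_inf F_h_inf h h_cont h_der|].
  split; first exact: lyapunov_inequality F_mono F_h_inf h_der.
  by move=> s_const; apply: strongly_monotone_decay F_mono F_h_inf s_const h_cont h_der.
move=> Gamma h_star lamL lamG [Gamma_sym _] psiE _ s_const _ Gamma_eig rho h_inf F_h_inf.
move=> h h_cont h_der; apply: strongly_monotone_decay F_h_inf s_const h_cont h_der.
apply: strongly_monotoneW (_ : rho <= lamG`_0) _; first by rewrite /rho ge_min lexx.
apply: graph_field_strongly_monotone => //; first exact: ltW.
have := quadratic_grad_strongly_monotone Gamma_sym Gamma_eig psiE psi_diff.
by apply; exact: psi_grad.
Qed.
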